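(* Let $\mathscr A=\{0,1,2\}$, and let $\mu$ be the inhomogeneous multinomial measure on $\partial\mathscr A^\ast=\mathscr A^{\mathbb N}$ with parameters $a_1,a_2,a_3,b_1,b_2,b_3\in(0,1)$, $\sum a_i=\sum b_i=1$, and a sequence $(T_k)$ (integers, $T_1=1$, strictly increasing, $T_{k+1}/T_k\to\infty$). Fix $q\in\mathbb R$. Then there exist a Borel probability measure $\nu$ on $\partial\mathscr A^\ast$ and a strictly increasing sequence of integers $(n_k)_{k\ge1}$ such that (i) for every $n\ge1$ and every $w\in\mathscr A^n$, $\nu(w)\le\mu(w)^q\,3^{-n\underline\tau(q)}$; (ii) for every $\varepsilon>0$ there is $k_0$ such that for all $k\ge k_0$ and all $w\in\mathscr A^{n_k}$, $\nu(w)\le\mu(w)^q\,3^{-n_k(\tau(q)-\varepsilon)}$.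
   Context: The inhomogeneous multinomial measure: for $w=\varepsilon_1\cdots\varepsilon_n\in\mathscr A^n$, $\mu(w)=\mu([w])=\prod_{j=1}^np_j$, where $p_j=a_{\varepsilon_j+1}$ if $T_{2k-1}\le j<T_{2k}$ for some $k$, and $p_j=b_{\varepsilon_j+1}$ if $T_{2k}\le j<T_{2k+1}$ for some $k$; $[w]$ denotes the set of infinite words beginning with $w$, and $\nu(w)=\nu([w])$. Define $\tau_n(q)$ by $\sum_{w\in\mathscr A^n}\mu(w)^q=3^{n\tau_n(q)}$, and $\tau(q)=\limsup_{n\to\infty}\tau_n(q)$, $\underline\tau(q)=\liminf_{n\to\infty}\tau_n(q)$. *)

From Stdlib Require Import Reals Lra Lia List ClassicalEpsilon.
Import ListNotations.
Open Scope R_scope.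

(* Alphabet A = {0,1,2}; finite words are lists of naturals with entries < 3. *)
Definition is_word (w : list nat) : Prop := Forall (fun e => (e < 3)%nat) w.

Fixpoint words (n : nat) : list (list nat) :=
  match n with
  | O => [ [] ]
  | S m => flat_map (fun e => map (cons e) (words m)) [0%nat; 1%nat; 2%nat]
  end.

(* Position j (1-based) lies in an "a-phase": T_{2k-1} <= j < T_{2k} for some k >= 1. *)
Definition in_a_phase (T : nat -> nat) (j : nat) : Prop :=
  exists k, (1 <= k)%nat /\ (T (2 * k - 1) <= j < T (2 * k))%nat.

(* p_j for letter e: a_{e+1} in an a-phase, b_{e+1} otherwise
   (i.e. T_{2k} <= j < T_{2k+1}, since T_1 = 1 and T is increasing). *)
Definition pj (a b : nat -> R) (T : nat -> nat) (j e : nat) : R :=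
  if excluded_middle_informative (in_a_phase T j) then a (S e) else b (S e).

Fixpoint mu_from (a b : nat -> R) (T : nat -> nat) (j : nat) (w : list nat) : R :=
  match w with
  | [] => 1
  | e :: w' => pj a b T j e * mu_from a b T (S j) w'
  end.

Definition mu (a b : nat -> R) (T : nat -> nat) (w : list nat) : R := mu_from a b T 1 w.

Definition sumR (l : list R) : R := fold_right Rplus 0 l.

Definition tau_n (a b : nat -> R) (T : nat -> nat) (q : R) (n : nat) : R :=
  ln (sumR (map (fun w => Rpower (mu a b T w) q) (words n))) / (INR n * ln 3).

Definition is_limsup (u : nat -> R) (l : R) : Prop :=
  forall eps, eps > 0 ->
    (exists N, forall n, (n >= N)%nat -> u n < l + eps) /\
    (forall N, exists n, (n >= N)%nat /\ u n > l - eps).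

Definition is_liminf (u : nat -> R) (l : R) : Prop :=
  forall eps, eps > 0 ->
    (exists N, forall n, (n >= N)%nat -> u n > l - eps) /\
    (forall N, exists n, (n >= N)%nat /\ u n < l + eps).

(* A Borel probability measure on A^N, given through its values on cylinders [w]
   (Kolmogorov / Caratheodory: these are in bijection with Borel probability measures). *)
Definition cyl_prob_measure (nu : list nat -> R) : Prop :=
  nu [] = 1 /\
  (forall w, is_word w -> 0 <= nu w) /\
  (forall w, is_word w -> nu w = nu (w ++ [0%nat]) + nu (w ++ [1%nat]) + nu (w ++ [2%nat])).

From Stdlib Require Import Reals List Lra Lia ClassicalEpsilon.
Import ListNotations.
Open Scope R_scope.

(* Take for nu the product measure nu(w) = prod_j p_j(eps_j)^q / s_j, where
   s_j = sum_e p_j(e)^q.  Since sum_{|w| = n} mu(w)^q = prod_{j <= n} s_j, one has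
   exactly nu(w) = mu(w)^q 3^{-n tau_n(q)}, so (ii) holds along any sequence n_k on
   which tau_n(q) tends to its limsup.  For (i), s_j takes only two values s_a, s_b,
   so tau_n(q) >= min(ln s_a, ln s_b) / ln 3 for every n.  Because T_{k+1}/T_k -> oo,
   the average of ln s_j over [1, T_{k+1}) is dominated by the block [T_k, T_{k+1}),
   which may be chosen in the minimizing phase; hence the liminf equals this minimum
   and bounds every tau_n(q) from below. *)

Fixpoint psum (s : nat -> R) (j n : nat) : R :=
  match n with
  | O => 0
  | S n' => s j + psum s (S j) n'
  end.

Lemma psum_le_const (s : nat -> R) (c : R) (n j : nat) :
  (forall i, (j <= i < j + n)%nat -> s i <= c) -> psum s j n <= INR n * c.
Proof.
  revert j; induction n as [|n IH]; intros j Hs; simpl psum.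
  - simpl; lra.
  - rewrite S_INR.
    assert (s j <= c) by (apply Hs; lia).
    assert (psum s (S j) n <= INR n * c) by (apply IH; intros; apply Hs; lia).
    lra.
Qed.

Lemma psum_ge_const (s : nat -> R) (c : R) (n j : nat) :
  (forall i, (j <= i < j + n)%nat -> c <= s i) -> INR n * c <= psum s j n.
Proof.
  revert j; induction n as [|n IH]; intros j Hs; simpl psum.
  - simpl; lra.
  - rewrite S_INR.
    assert (c <= s j) by (apply Hs; lia).
    assert (INR n * c <= psum s (S j) n) by (apply IH; intros; apply Hs; lia).
    lra.
Qed.

Lemma psum_add_len (s : nat -> R) (n1 n2 j : nat) :
  psum s j (n1 + n2) = psum s j n1 + psum s (j + n1) n2.
Proof.
  revert j; induction n1 as [|n1 IH]; intro j; simpl.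
  - rewrite Nat.add_0_r; ring.
  - rewrite IH, Nat.add_succ_r; simpl; ring.
Qed.

Lemma sumR_app (l1 l2 : list R) : sumR (l1 ++ l2) = sumR l1 + sumR l2.
Proof. induction l1 as [|x l1 IH]; simpl; [ring | rewrite IH; ring]. Qed.

Lemma sumR_map_scal {A : Type} (c : R) (g : A -> R) (l : list A) :
  sumR (map (fun x => c * g x) l) = c * sumR (map g l).
Proof. induction l as [|x l IH]; simpl; [ring | rewrite IH; ring]. Qed.

Lemma words_is_word (n : nat) (w : list nat) : In w (words n) -> is_word w.
Proof.
  revert w; induction n as [|n IH]; simpl; intros w Hw.
  - destruct Hw as [<- | []]; constructor.
  - rewrite !in_app_iff, !in_map_iff in Hw.
    destruct Hw as [[x [<- Hx]] | [[x [<- Hx]] | [[x [<- Hx]] | []]]];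
      (constructor; [lia | exact (IH x Hx)]).
Qed.

Section ProductMeasure.

Variable f : nat -> nat -> R.
Hypothesis f_pos : forall j e, 0 < f j e.

Fixpoint weight (j : nat) (w : list nat) : R :=
  match w with
  | [] => 1
  | e :: w' => f j e * weight (S j) w'
  end.

Definition mass (j : nat) : R := f j 0 + f j 1 + f j 2.

Fixpoint partition (j n : nat) : R :=
  match n with
  | O => 1
  | S n' => mass j * partition (S j) n'
  end.

Fixpoint gibbs (j : nat) (w : list nat) : R :=
  match w with
  | [] => 1
  | e :: w' => f j e / mass j * gibbs (S j) w'
  end.

Lemma mass_pos (j : nat) : 0 < mass j.
Proof.
  unfold mass; pose proof (f_pos j 0); pose proof (f_pos j 1); pose proof (f_pos j 2); lra.
Qed.

Lemma partition_pos (n j : nat) : 0 < partition j n.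
Proof.
  revert j; induction n as [|n IH]; intro j; simpl.
  - lra.
  - apply Rmult_lt_0_compat; [apply mass_pos | apply IH].
Qed.

Lemma ln_partition (n j : nat) : ln (partition j n) = psum (fun i => ln (mass i)) j n.
Proof.
  revert j; induction n as [|n IH]; intro j; simpl.
  - apply ln_1.
  - rewrite ln_mult by (apply mass_pos || apply partition_pos). now rewrite IH.
Qed.

Lemma sum_weight_words (n j : nat) : sumR (map (weight j) (words n)) = partition j n.
Proof.
  revert j; induction n as [|n IH]; intro j.
  - simpl; ring.
  - simpl words; rewrite !map_app, !sumR_app, !map_map; simpl weight.
    rewrite !sumR_map_scal, IH; simpl; unfold mass; ring.
Qed.

Lemma gibbs_eq_weight (w : list nat) (j : nat) :
  gibbs j w = weight j w / partition j (length w).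
Proof.
  revert j; induction w as [|e w IH]; intro j; simpl.
  - field.
  - rewrite IH.
    pose proof (mass_pos j); pose proof (partition_pos (length w) (S j)).
    field; lra.
Qed.

Lemma gibbs_nonneg (w : list nat) (j : nat) : 0 <= gibbs j w.
Proof.
  revert j; induction w as [|e w IH]; intro j; simpl.
  - lra.
  - apply Rmult_le_pos; [|apply IH].
    left; apply Rdiv_lt_0_compat; [apply f_pos | apply mass_pos].
Qed.

Lemma gibbs_extend (w : list nat) (j : nat) :
  gibbs j w = gibbs j (w ++ [0%nat]) + gibbs j (w ++ [1%nat]) + gibbs j (w ++ [2%nat]).
Proof.
  revert j; induction w as [|e w IH]; intro j; simpl.
  - pose proof (mass_pos j); unfold mass in *; field; lra.
  - rewrite (IH (S j)); ring.
Qed.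

Lemma gibbs_cyl_prob_measure : cyl_prob_measure (gibbs 1).
Proof.
  split; [reflexivity | split]; intros w _; [apply gibbs_nonneg | apply gibbs_extend].
Qed.

End ProductMeasure.

Lemma Rpower_1_l (q : R) : Rpower 1 q = 1.
Proof. unfold Rpower; rewrite ln_1, Rmult_0_r; apply exp_0. Qed.

Lemma ln3_pos : 0 < ln 3.
Proof. rewrite <- ln_1; apply ln_increasing; lra. Qed.

Section PowerMeasure.

Variables (a b : nat -> R) (T : nat -> nat) (q : R).
Hypothesis a_pos : forall i, (1 <= i <= 3)%nat -> 0 < a i.
Hypothesis b_pos : forall i, (1 <= i <= 3)%nat -> 0 < b i.

Definition pjq (j e : nat) : R := Rpower (pj a b T j e) q.

Lemma pjq_pos (j e : nat) : 0 < pjq j e.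
Proof. apply exp_pos. Qed.

Lemma pj_pos (j e : nat) : (e < 3)%nat -> 0 < pj a b T j e.
Proof.
  intro He; unfold pj; destruct (excluded_middle_informative _);
    [apply a_pos | apply b_pos]; lia.
Qed.

Lemma mu_from_pos (w : list nat) (j : nat) : is_word w -> 0 < mu_from a b T j w.
Proof.
  intro Hw; revert j; induction Hw as [|e w He Hw IH]; intro j; simpl.
  - lra.
  - apply Rmult_lt_0_compat; [apply pj_pos | apply IH]; assumption.
Qed.

Lemma weight_pjq (w : list nat) (j : nat) :
  is_word w -> weight pjq j w = Rpower (mu_from a b T j w) q.
Proof.
  intro Hw; revert j; induction Hw as [|e w He Hw IH]; intro j; simpl.
  - now rewrite Rpower_1_l.
  - unfold pjq at 1; rewrite IH, Rpower_mult_distr;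
      [reflexivity | apply pj_pos | apply mu_from_pos]; assumption.
Qed.

Lemma tau_n_eq (n : nat) :
  tau_n a b T q n = psum (fun j => ln (mass pjq j)) 1 n / (INR n * ln 3).
Proof.
  unfold tau_n, mu.
  replace (map _ (words n)) with (map (weight pjq 1) (words n)).
  - rewrite sum_weight_words, ln_partition; [reflexivity | apply pjq_pos].
  - apply map_ext_in; intros w Hw; apply weight_pjq, (words_is_word n), Hw.
Qed.

Lemma gibbs_pjq_eq (w : list nat) : is_word w -> (1 <= length w)%nat ->
  gibbs pjq 1 w
  = Rpower (mu a b T w) q * Rpower 3 (- (INR (length w) * tau_n a b T q (length w))).
Proof.
  intros Hw Hn.
  assert (0 < INR (length w)) by (apply lt_0_INR; lia).
  pose proof ln3_pos.
  rewrite gibbs_eq_weight, weight_pjq, tau_n_eq, <- ln_partition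
    by (assumption || apply pjq_pos).
  set (Z := partition pjq 1 (length w)).
  replace (Rpower 3 _) with (/ Z); [reflexivity|].
  unfold Rpower.
  replace (- (INR (length w) * (ln Z / (INR (length w) * ln 3))) * ln 3) with (- ln Z)
    by (field; lra).
  rewrite exp_Ropp, exp_ln; [reflexivity | apply partition_pos, pjq_pos].
Qed.

Lemma gibbs_pjq_le (w : list nat) (t : R) :
  is_word w -> (1 <= length w)%nat -> t <= tau_n a b T q (length w) ->
  gibbs pjq 1 w <= Rpower (mu a b T w) q * Rpower 3 (- (INR (length w) * t)).
Proof.
  intros Hw Hn Ht.
  rewrite gibbs_pjq_eq by assumption.
  apply Rmult_le_compat_l; [left; apply exp_pos|].
  apply Rle_Rpower; [lra|].
  pose proof (pos_INR (length w)); nra.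
Qed.

End PowerMeasure.

Section Lacunary.

Variable T : nat -> nat.
Hypothesis T_incr : forall k, (1 <= k)%nat -> (T k < T (S k))%nat.

Lemma T_le (i i' : nat) : (1 <= i)%nat -> (i <= i')%nat -> (T i <= T i')%nat.
Proof.
  intros Hi Hii'; induction Hii' as [|i' Hii' IH]; [lia|].
  specialize (T_incr i' ltac:(lia)); lia.
Qed.

Hypothesis T_1 : T 1%nat = 1%nat.

Lemma index_le_T (k : nat) : (1 <= k)%nat -> (k <= T k)%nat.
Proof.
  induction k as [|k IH]; intro Hk; [lia|].
  destruct k as [|k]; [lia|].
  specialize (IH ltac:(lia)); specialize (T_incr (S k) ltac:(lia)); lia.
Qed.

Hypothesis T_ratio : forall M, exists K, forall k, (K <= k)%nat -> (1 <= k)%nat ->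
  INR (T (S k)) / INR (T k) > M.

(* Take n = T_{i+1} - 1.  The head [1, T_i) costs at most T_i (M - m), which is below
   n d as soon as T_{i+1} / T_i > 2 (M - m + 1) / d. *)
Lemma psum_frequently_near_min (s : nat -> R) (m M : R) :
  m <= M -> (forall j, s j <= M) ->
  (forall K, exists i, (K <= i)%nat /\ (1 <= i)%nat /\
     forall j, (T i <= j < T (S i))%nat -> s j <= m) ->
  forall d, 0 < d -> forall N, exists n, (N <= n)%nat /\ (1 <= n)%nat /\
    psum s 1 n < INR n * (m + d).
Proof.
  intros HmM Hs Hblock d Hd N.
  destruct (T_ratio (2 * (M - m + 1) / d)) as [K HK].
  destruct (Hblock (Nat.max K N)) as [i [HiK [Hi1 Hblk]]].
  pose proof (index_le_T i Hi1); pose proof (index_le_T (S i) ltac:(lia)).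
  pose proof (T_incr i Hi1).
  specialize (HK i ltac:(lia) Hi1).
  set (t := T i) in *; set (t' := T (S i)) in *.
  exists (t' - 1)%nat; split; [lia | split; [lia |]].
  replace (t' - 1)%nat with ((t - 1) + (t' - t))%nat by lia.
  rewrite psum_add_len, plus_INR.
  replace (1 + (t - 1))%nat with t by lia.
  assert (Hhead : psum s 1 (t - 1) <= INR (t - 1) * M) by (apply psum_le_const; auto).
  assert (Htail : psum s t (t' - t) <= INR (t' - t) * m)
    by (apply psum_le_const; intros; apply Hblk; lia).
  rewrite !minus_INR in * by lia; simpl INR in *.
  assert (Hx : 1 <= INR t) by (apply (le_INR 1); lia).
  assert (Hy : 2 <= INR t') by (apply (le_INR 2); lia).
  set (r := INR t' / INR t) in HK.
  assert (Hyr : INR t' = r * INR t) by (unfold r; field; lra).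
  assert (Hratio : 0 < (r - 2 * (M - m + 1) / d) * (INR t * d))
    by (apply Rmult_lt_0_compat; nra).
  assert (Hcancel : 2 * (M - m + 1) / d * d = 2 * (M - m + 1)) by (field; lra).
  nra.
Qed.

End Lacunary.

Lemma liminf_le_of_frequently_lt (u : nat -> R) (l c : R) :
  is_liminf u l ->
  (forall d, 0 < d -> forall N, exists n, (N <= n)%nat /\ u n < c + d) -> l <= c.
Proof.
  intros Hl Hfreq; apply Rnot_lt_le; intro Hcl.
  destruct (Hl ((l - c) / 2) ltac:(lra)) as [[N HN] _].
  destruct (Hfreq ((l - c) / 2) ltac:(lra) N) as [n [Hn Hun]].
  specialize (HN n Hn); lra.
Qed.

Lemma limsup_subsequence (u : nat -> R) (l : R) : is_limsup u l ->
  exists nk : nat -> nat,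
    (forall k, (nk k < nk (S k))%nat) /\ (forall k, (1 <= nk k)%nat) /\
    (forall eps, eps > 0 -> exists k0, forall k, (k0 <= k)%nat -> u (nk k) > l - eps).
Proof.
  intro Hl.
  destruct (choice (fun N n => (N <= n)%nat /\ u n > l - / INR (S N))) as [h Hh].
  { intro N; apply (proj2 (Hl _ (Rinv_0_lt_compat _ (lt_0_INR _ (Nat.lt_0_succ N)))) N). }
  set (g := fun n => h (S n)).
  assert (Hg : forall k, (k <= Nat.iter k g 0%nat)%nat).
  { induction k as [|k IH]; [simpl; lia|].
    change (Nat.iter (S k) g 0%nat) with (h (S (Nat.iter k g 0%nat))).
    destruct (Hh (S (Nat.iter k g 0%nat))); lia. }
  exists (fun k => Nat.iter (S k) g 0%nat); split; [|split].
  - intro k; change (Nat.iter (S (S k)) g 0%nat) with (h (S (Nat.iter (S k) g 0%nat))).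
    destruct (Hh (S (Nat.iter (S k) g 0%nat))); lia.
  - intro k; specialize (Hg (S k)); lia.
  - intros eps Heps; destruct (archimed_cor1 eps Heps) as [k0 [Hk0 Hk0pos]].
    exists k0; intros k Hk.
    change (Nat.iter (S k) g 0%nat) with (h (S (Nat.iter k g 0%nat))).
    destruct (Hh (S (Nat.iter k g 0%nat))) as [_ Hu].
    assert (/ INR (S (S (Nat.iter k g 0%nat))) <= / INR k0).
    { apply Rinv_le_contravar; [apply lt_0_INR; lia | apply le_INR; specialize (Hg k); lia]. }
    lra.
Qed.

Section TwoPhases.

Variables (a b : nat -> R) (T : nat -> nat) (q : R).
Hypothesis a_pos : forall i, (1 <= i <= 3)%nat -> 0 < a i.
Hypothesis b_pos : forall i, (1 <= i <= 3)%nat -> 0 < b i.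
Hypothesis T_incr : forall k, (1 <= k)%nat -> (T k < T (S k))%nat.

Definition power_sum (c : nat -> R) : R :=
  Rpower (c 1%nat) q + Rpower (c 2%nat) q + Rpower (c 3%nat) q.

Definition ln_mass_min : R := Rmin (ln (power_sum a)) (ln (power_sum b)).
Definition ln_mass_max : R := Rmax (ln (power_sum a)) (ln (power_sum b)).

Lemma mass_pjq (j : nat) : mass (pjq a b T q) j =
  if excluded_middle_informative (in_a_phase T j) then power_sum a else power_sum b.
Proof. unfold mass, pjq, pj, power_sum; destruct (excluded_middle_informative _); reflexivity. Qed.

Lemma ln_mass_pjq_bounds (j : nat) :
  ln_mass_min <= ln (mass (pjq a b T q) j) <= ln_mass_max.
Proof.
  unfold ln_mass_min, ln_mass_max; rewrite mass_pjq.
  destruct (excluded_middle_informative _); split;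
    apply Rmin_l || apply Rmax_l || apply Rmin_r || apply Rmax_r.
Qed.

Lemma min_phase_blocks (K : nat) : exists i, (K <= i)%nat /\ (1 <= i)%nat /\
  forall j, (T i <= j < T (S i))%nat -> ln (mass (pjq a b T q) j) <= ln_mass_min.
Proof.
  unfold ln_mass_min.
  destruct (Rle_or_lt (ln (power_sum a)) (ln (power_sum b))) as [Hab | Hba].
  - exists (S (2 * K)); split; [lia | split; [lia |]]; intros j Hj.
    rewrite mass_pjq; destruct (excluded_middle_informative _) as [_ | Hnot].
    + rewrite Rmin_left; lra.
    + exfalso; apply Hnot; exists (S K).
      replace (2 * S K - 1)%nat with (S (2 * K)) by lia.
      replace (2 * S K)%nat with (S (S (2 * K))) by lia.
      split; [lia | exact Hj].
  - exists (2 * S K)%nat; split; [lia | split; [lia |]]; intros j Hj.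
    rewrite mass_pjq; destruct (excluded_middle_informative _) as [[k [Hk Hkj]] | _].
    + exfalso; destruct (Nat.le_gt_cases k (S K)).
      * pose proof (T_le T T_incr (2 * k) (2 * S K) ltac:(lia) ltac:(lia)); lia.
      * pose proof (T_le T T_incr (S (2 * S K)) (2 * k - 1) ltac:(lia) ltac:(lia)); lia.
    + rewrite Rmin_right; lra.
Qed.

Lemma tau_n_ge_min (n : nat) : (1 <= n)%nat -> ln_mass_min / ln 3 <= tau_n a b T q n.
Proof.
  intro Hn; rewrite tau_n_eq by assumption.
  assert (0 < INR n) by (apply lt_0_INR; lia); pose proof ln3_pos.
  assert (Hsum : INR n * ln_mass_min <= psum (fun j => ln (mass (pjq a b T q) j)) 1 n)
    by (apply psum_ge_const; intros; apply ln_mass_pjq_bounds).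
  replace (ln_mass_min / ln 3) with (INR n * ln_mass_min / (INR n * ln 3)) by (field; lra).
  unfold Rdiv; apply Rmult_le_compat_r; [left; apply Rinv_0_lt_compat; nra | exact Hsum].
Qed.

Hypothesis T_1 : T 1%nat = 1%nat.
Hypothesis T_ratio : forall M, exists K, forall k, (K <= k)%nat -> (1 <= k)%nat ->
  INR (T (S k)) / INR (T k) > M.

Lemma tau_n_frequently_near_min (d : R) : 0 < d -> forall N, exists n,
  (N <= n)%nat /\ tau_n a b T q n < ln_mass_min / ln 3 + d.
Proof.
  intros Hd N; pose proof ln3_pos.
  destruct (psum_frequently_near_min T T_incr T_1 T_ratio
              (fun j => ln (mass (pjq a b T q) j)) ln_mass_min ln_mass_max)
    with (d := d * ln 3) (N := N) as [n [HNn [Hn Hsum]]].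
  - pose proof (ln_mass_pjq_bounds 0); lra.
  - intro j; apply ln_mass_pjq_bounds.
  - exact min_phase_blocks.
  - nra.
  - exists n; split; [exact HNn|].
    assert (0 < INR n) by (apply lt_0_INR; lia).
    rewrite tau_n_eq by assumption.
    apply Rmult_lt_reg_r with (INR n * ln 3); [nra|].
    replace ((ln_mass_min / ln 3 + d) * (INR n * ln 3))
      with (INR n * (ln_mass_min + d * ln 3)) by (field; lra).
    unfold Rdiv; rewrite Rmult_assoc, Rinv_l, Rmult_1_r by nra; exact Hsum.
Qed.

Lemma liminf_tau_n_le (tau_low : R) : is_liminf (tau_n a b T q) tau_low ->
  forall n, (1 <= n)%nat -> tau_low <= tau_n a b T q n.
Proof.
  intros Hl n Hn.
  apply Rle_trans with (ln_mass_min / ln 3); [|exact (tau_n_ge_min n Hn)].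
  exact (liminf_le_of_frequently_lt _ _ _ Hl tau_n_frequently_near_min).
Qed.

End TwoPhases.

Theorem lemma6 (a b : nat -> R) (T : nat -> nat) (q : R)
  (ha : forall i, (1 <= i <= 3)%nat -> 0 < a i < 1)
  (hb : forall i, (1 <= i <= 3)%nat -> 0 < b i < 1)
  (hsa : a 1%nat + a 2%nat + a 3%nat = 1)
  (hsb : b 1%nat + b 2%nat + b 3%nat = 1)
  (hT1 : T 1%nat = 1%nat)
  (hTinc : forall k, (1 <= k)%nat -> (T k < T (S k))%nat)
  (hTratio : forall M, exists K, forall k, (K <= k)%nat -> (1 <= k)%nat ->
      INR (T (S k)) / INR (T k) > M)
  (tau tau_low : R)
  (htau : is_limsup (tau_n a b T q) tau)
  (htau_low : is_liminf (tau_n a b T q) tau_low) :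
  exists (nu : list nat -> R) (nk : nat -> nat),
    cyl_prob_measure nu /\
    (forall k, (nk k < nk (S k))%nat) /\
    (forall (n : nat) (w : list nat), (1 <= n)%nat -> is_word w -> length w = n ->
       nu w <= Rpower (mu a b T w) q * Rpower 3 (- (INR n * tau_low))) /\
    (forall eps, eps > 0 -> exists k0, forall k (w : list nat), (k0 <= k)%nat ->
       is_word w -> length w = nk k ->
       nu w <= Rpower (mu a b T w) q * Rpower 3 (- (INR (nk k) * (tau - eps)))).
Proof.
  assert (a_pos : forall i, (1 <= i <= 3)%nat -> 0 < a i) by (intros i Hi; apply ha, Hi).
  assert (b_pos : forall i, (1 <= i <= 3)%nat -> 0 < b i) by (intros i Hi; apply hb, Hi).
  destruct (limsup_subsequence _ _ htau) as [nk [nk_incr [nk_pos nk_near]]].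
  exists (gibbs (pjq a b T q) 1), nk.
  split; [apply gibbs_cyl_prob_measure, pjq_pos |].
  split; [exact nk_incr |].
  split.
  - intros n w Hn Hw <-.
    apply gibbs_pjq_le; auto.
    apply (liminf_tau_n_le a b T q a_pos b_pos hTinc hT1 hTratio); assumption.
  - intros eps Heps; destruct (nk_near eps Heps) as [k0 Hk0].
    exists k0; intros k w Hk Hw Hlen; rewrite <- Hlen.
    specialize (Hk0 k Hk); specialize (nk_pos k); rewrite <- Hlen in Hk0, nk_pos.
    apply gibbs_pjq_le; auto; lra.
Qed.
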